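(* There is a Borel map $d:\{(u,v)\in[0,\infty]^{\mathbb N}\times[0,\infty]^{\mathbb N}\mid\sum_iu(i)=\sum_jv(j)\}\to[0,\infty]^{\mathbb N^2}$ such that for all $(u,v)$ in its domain and all $i,j\in\mathbb N$, $u(i)=\sum_jd(u,v)(i,j)$ and $v(j)=\sum_id(u,v)(i,j)$.
   Context: $[0,\infty]^{\mathbb N}$ and $[0,\infty]^{\mathbb N^2}$ carry their standard product Borel structures. *)

From HB Require Import structures.
From mathcomp Require Import all_boot all_order all_algebra.
From mathcomp Require Import all_classical all_reals all_analysis measurable_realfun.
Set Implicit Arguments. Unset Strict Implicit. Unset Printing Implicit Defensive.
Import Order.TTheory GRing.Theory Num.Theory.
Local Open Scope classical_set_scope.
Local Open Scope ring_scope.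

Definition pi_sigma (I T : Type) (ST : set (set T)) : set (set (I -> T)) :=
  <<s \bigcup_(i in [set: I]) preimage_set_system setT (fun f : I -> T => f i) ST >>.

Definition prod_sigma (A B : Type) (SA : set (set A)) (SB : set (set B))
  : set (set (A * B)) :=
  <<s preimage_set_system setT fst SA `|` preimage_set_system setT snd SB >>.

(* f, defined on the subset D of X, is measurable for the trace sigma-algebra
   of SX on D and the sigma-algebra SY. *)
Definition measurable_on (X Y : Type) (SX : set (set X)) (SY : set (set Y))
  (D : set X) (f : X -> Y) : Prop :=
  forall B, SY B -> exists A, SX A /\ D `&` f @^-1` B = D `&` A.

(* Borel sets of [0, oo] are the traces of the Borel sets of \bar R. *)
Definition ereal_borel (R : realType) : set (set \bar R) :=
  (measurable : set (set \bar R)).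

Definition bal_dom (R : realType) : set ((nat -> \bar R) * (nat -> \bar R)) :=
  [set uv | (forall i, (0 <= uv.1 i)%E) /\ (forall j, (0 <= uv.2 j)%E) /\
            (\sum_(i <oo) uv.1 i)%E = (\sum_(j <oo) uv.2 j)%E].
Arguments ereal_borel R : clear implicits.
Arguments bal_dom R : clear implicits.

From HB Require Import structures.
From mathcomp Require Import all_boot all_order all_algebra.
From mathcomp Require Import all_classical all_reals all_analysis measurable_realfun.
From mathcomp Require Import lra.
From Stdlib Require Cantor.

Set Implicit Arguments.
Unset Strict Implicit.
Unset Printing Implicit Defensive.
Import Order.TTheory GRing.Theory Num.Theory.
Local Open Scope classical_set_scope.
Local Open Scope ring_scope.

(* Spread every entry u(i) of [0, oo] over a sequence of finite nonnegative
   reals summing to u(i) (u(i) itself followed by zeros if it is finite,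
   infinitely many ones otherwise), and interleave these sequences into one
   real sequence x; do the same with v to get y.  Since sum x = sum u = sum v
   = sum y, the quantile (north-west corner) coupling of x and y, whose entry
   (k, l) is the length of the overlap of [X_k, X_(k+1)] and [Y_l, Y_(l+1)]
   for the partial sums X and Y, has marginals x and y.  Summing it over the
   blocks of x and y coming from u(i) and v(j) gives d(u, v)(i, j).  Every
   step is built from the coordinates by countable sums, min, max and
   subtraction, hence d is Borel. *)

Section interval_overlap.
Variable R : realDomainType.
Implicit Types a b c d x y : R.

Definition clamp a b x := Num.min (Num.max x a) b.

Definition overlap a b c d := Num.max 0 (Num.min b d - Num.max a c).

Local Ltac no_minmax t :=
  lazymatch t with
  | context [Num.max _ _] => fail
  | context [Num.min _ _] => fail
  | _ => idtac
  end.

(* Splitting an innermost [min]/[max] first keeps every case hypothesis free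
   of [min] and [max], so that [lra] can use it. *)
Local Ltac minmax_lra :=
  repeat match goal with
  | |- context [Num.max ?x ?y] => no_minmax x; no_minmax y; case: (leP x y) => ?
  | |- context [Num.min ?x ?y] => no_minmax x; no_minmax y; case: (leP x y) => ?
  end; lra.

Lemma overlap_ge0 a b c d : 0 <= overlap a b c d.
Proof. by rewrite /overlap le_max lexx. Qed.

Lemma overlapC a b c d : overlap a b c d = overlap c d a b.
Proof. by rewrite /overlap (minC b) (maxC a). Qed.

Lemma overlap_clampE a b c d : a <= b -> c <= d ->
  overlap a b c d = clamp a b d - clamp a b c.
Proof. rewrite /overlap /clamp => *; minmax_lra. Qed.

Lemma clamp_lbE a b x : a <= b -> x <= a -> clamp a b x = a.
Proof. rewrite /clamp => *; minmax_lra. Qed.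

Lemma clamp_ub a b x : a <= b -> clamp a b x <= b.
Proof. rewrite /clamp => *; minmax_lra. Qed.

Lemma clamp_ge a b x y : a <= b -> y <= b -> y <= x -> y <= clamp a b x.
Proof. rewrite /clamp => *; minmax_lra. Qed.

End interval_overlap.

Section quantile_coupling.
Variable R : realType.
Implicit Types x y : nat -> R.

Definition coupling x y k l :=
  overlap (series x k) (series x k.+1) (series y l) (series y l.+1).

Lemma coupling_ge0 x y k l : 0 <= coupling x y k l.
Proof. exact: overlap_ge0. Qed.

Lemma couplingC x y k l : coupling x y k l = coupling y x l k.
Proof. exact: overlapC. Qed.

Lemma nneseries_EFin_sup x : (forall n, 0 <= x n) ->
  (\sum_(n <oo) (x n)%:E = ereal_sup (range (fun n => (series x n)%:E)))%E.
Proof.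
move=> x_ge0; apply/cvg_lim => //.
rewrite (_ : (fun n => _) = (fun n => (series x n)%:E)); last first.
  by apply/funext => n; rewrite sumEFin.
apply: ereal_nondecreasing_cvgn => m n mn; rewrite lee_fin.
exact: nondecreasing_series.
Qed.

Variables x y : nat -> R.
Hypothesis x_ge0 : forall n, 0 <= x n.
Hypothesis y_ge0 : forall n, 0 <= y n.

Let series_leS (z : nat -> R) :
  (forall n, 0 <= z n) -> forall n, series z n <= series z n.+1.
Proof. by move=> z_ge0 n; rewrite seriesSr lerDl. Qed.

Lemma series_coupling k L :
  series (coupling x y k) L =
  clamp (series x k) (series x k.+1) (series y L) - series x k.
Proof.
have x_leS := series_leS x_ge0; have y_leS := series_leS y_ge0.
rewrite {1}/series /= /coupling.
under eq_bigr do rewrite overlap_clampE //.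
have series_y0 : series y 0 = 0 by rewrite /series /= big_geq.
rewrite telescope_sumr // series_y0 (@clamp_lbE _ _ _ 0) //.
by rewrite /series /=; apply: sumr_ge0 => i _.
Qed.

Lemma nneseries_coupling_row k :
  (\sum_(n <oo) (x n)%:E <= \sum_(n <oo) (y n)%:E)%E ->
  (\sum_(l <oo) (coupling x y k l)%:E = (x k)%:E)%E.
Proof.
move=> le_xy; have x_leS := series_leS x_ge0.
rewrite nneseries_EFin_sup; last by move=> l; exact: coupling_ge0.
rewrite -(seriesSB x k); apply/eqP; rewrite eq_le; apply/andP; split.
  apply: ge_ereal_sup => _ [L _ <-].
  by rewrite series_coupling lee_fin lerD2r clamp_ub.
apply/lee_subgt0Pr => e e0.
have : ((series x k.+1 - e)%:E < \sum_(n <oo) (y n)%:E)%E.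
  apply: lt_le_trans le_xy; rewrite nneseries_EFin_sup //.
  apply: lt_le_trans (ereal_sup_ubound _); last by exists k.+1.
  by rewrite lte_fin gtrDl oppr_lt0.
rewrite nneseries_EFin_sup // => /ereal_sup_gt[_ [L _ <-]].
rewrite lte_fin => lt_yL.
apply: le_trans (ereal_sup_ubound _); last by exists L.
rewrite series_coupling -EFinB lee_fin.
have e_le : series x k.+1 - e <= series x k.+1 by rewrite gerBl ltW.
have := clamp_ge (x_leS k) e_le (ltW lt_yL); lra.
Qed.

End quantile_coupling.

Section spread.
Variable R : realType.

Definition spread (a : \bar R) (n : nat) : R :=
  if a == +oo%E then 1 else if n == 0%N then fine a else 0.

Local Open Scope ereal_scope.

Lemma spread_ge0 a n : 0 <= a -> (0 <= spread a n)%R.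
Proof.
by rewrite /spread => a0; case: ifP => // _; case: ifP => // _; exact: fine_ge0.
Qed.

Lemma nneseries_spread a : 0 <= a -> \sum_(n <oo) (spread a n)%:E = a.
Proof.
move=> a0; rewrite /spread; case: eqP => [->|a_fin].
  apply/cvg_lim => //.
  rewrite (_ : (fun m => _) = (fun m => m%:R%:E)); first exact/cvgenyP.
  by apply/funext => m; rewrite sumEFin sumr_const_nat subn0.
rewrite nneseries_recl //; last by move=> n _; case: ifP => // _; exact: fine_ge0.
rewrite eseries0 ?adde0 /=; last by case.
by rewrite fineK // ge0_fin_numE // ltey; apply/eqP.
Qed.

Definition spread_seq (u : nat -> \bar R) (k : nat) : R :=
  let: (i, n) := Cantor.of_nat k in spread (u i) n.

Lemma spread_seq_pair u i n : spread_seq u (Cantor.to_nat (i, n)) = spread (u i) n.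
Proof. by rewrite /spread_seq Cantor.cancel_of_to. Qed.

Lemma spread_seq_ge0 u k : (forall i, 0 <= u i) -> (0 <= spread_seq u k)%R.
Proof. by rewrite /spread_seq; case: Cantor.of_nat => i n u_ge0; exact: spread_ge0. Qed.

Lemma nneseries_pair (h : nat -> \bar R) : (forall k, 0 <= h k) ->
  \sum_(i <oo) \sum_(n <oo) h (Cantor.to_nat (i, n)) = \sum_(k <oo) h k.
Proof.
move=> h_ge0; rewrite nneseries_esumT // nneseries_esumT; last first.
  by move=> i; exact: nneseries_ge0.
under eq_esum do rewrite nneseries_esumT //.
rewrite esum_esum // (reindex_esum ([set: nat] `*`` fun=> [set: nat]) _ Cantor.to_nat).
  by apply: eq_esum => -[i n].
split => [//|[i n] [i' n'] _ _ eq_in|k _].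
  by rewrite -(Cantor.cancel_of_to (i, n)) eq_in Cantor.cancel_of_to.
by exists (Cantor.of_nat k); rewrite ?Cantor.cancel_to_of.
Qed.

Lemma nneseries_spread_seq u : (forall i, 0 <= u i) ->
  \sum_(k <oo) (spread_seq u k)%:E = \sum_(i <oo) u i.
Proof.
move=> u_ge0; rewrite -nneseries_pair => [|k]; last first.
  by rewrite lee_fin spread_seq_ge0.
apply: eq_eseriesr => i _; under eq_eseriesr do rewrite spread_seq_pair.
exact: nneseries_spread.
Qed.

Definition transport (u v : nat -> \bar R) (ij : nat * nat) : \bar R :=
  \sum_(n <oo) \sum_(m <oo) (coupling (spread_seq u) (spread_seq v)
    (Cantor.to_nat (ij.1, n)) (Cantor.to_nat (ij.2, m)))%:E.

Lemma transport_ge0 u v ij : 0 <= transport u v ij.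
Proof.
by do 2 apply: nneseries_ge0 => ? _ _; rewrite lee_fin coupling_ge0.
Qed.

Lemma transportC u v i j : transport u v (i, j) = transport v u (j, i).
Proof.
rewrite /transport nneseries_interchange => [|n m]; last first.
  by rewrite lee_fin coupling_ge0.
by do 2 apply: eq_eseriesr => ? _; rewrite couplingC.
Qed.

Section marginals.
Variables u v : nat -> \bar R.
Hypothesis u_ge0 : forall i, 0 <= u i.
Hypothesis v_ge0 : forall j, 0 <= v j.
Hypothesis sum_uv : \sum_(i <oo) u i = \sum_(j <oo) v j.

Lemma nneseries_transport_row i : \sum_(j <oo) transport u v (i, j) = u i.
Proof.
rewrite /transport nneseries_interchange => [|j n]; last first.
  by apply: nneseries_ge0 => m _ _; rewrite lee_fin coupling_ge0.
rewrite -(nneseries_spread (u_ge0 i)); apply: eq_eseriesr => n _.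
rewrite (@nneseries_pair (fun l => (coupling (spread_seq u) (spread_seq v)
  (Cantor.to_nat (i, n)) l)%:E)) => [|l]; last by rewrite lee_fin coupling_ge0.
rewrite nneseries_coupling_row => [|k|k|]; first by rewrite spread_seq_pair.
- exact: spread_seq_ge0.
- exact: spread_seq_ge0.
- by rewrite !nneseries_spread_seq // sum_uv.
Qed.
End marginals.

Lemma nneseries_transport_col u v j : (forall i, 0 <= u i) -> (forall k, 0 <= v k) ->
  \sum_(i <oo) u i = \sum_(j <oo) v j ->
  \sum_(i <oo) transport u v (i, j) = v j.
Proof.
move=> u_ge0 v_ge0 sum_uv; under eq_eseriesr do rewrite transportC.
exact: nneseries_transport_row.
Qed.

End spread.

Section measurable_transport.
Context d (T : measurableType d) (R : realType).

Lemma measurable_spread n : measurable_fun [set: \bar R] (fun a => spread a n).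
Proof.
apply: measurable_fun_ifT => //.
  by apply: measurable_fun_eqe => //; exact: measurable_cst.
by case: (n == 0%N); [exact: fine_measurable|exact: measurable_cst].
Qed.

Lemma measurable_spread_seq (w : T -> nat -> \bar R) k :
  (forall i, measurable_fun [set: T] (w^~ i)) ->
  measurable_fun [set: T] (fun t => spread_seq (w t) k).
Proof.
rewrite /spread_seq; case: Cantor.of_nat => i n mw.
exact: measurableT_comp (measurable_spread n) (mw i).
Qed.

Variables u v : T -> nat -> \bar R.
Hypothesis mu : forall i, measurable_fun [set: T] (u^~ i).
Hypothesis mv : forall j, measurable_fun [set: T] (v^~ j).

Lemma measurable_coupling k l : measurable_fun [set: T]
  (fun t => coupling (spread_seq (u t)) (spread_seq (v t)) k l).
Proof.
have mseries (w : T -> nat -> \bar R) n :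
    (forall i, measurable_fun [set: T] (w^~ i)) ->
    measurable_fun [set: T] (fun t => series (spread_seq (w t)) n).
  by move=> mw; apply: measurable_sum => k'; exact: measurable_spread_seq.
rewrite /coupling /overlap; apply: measurable_maxr; first exact: measurable_cst.
by apply: measurable_funB;
  [apply: measurable_minr|apply: measurable_maxr]; exact: mseries.
Qed.

Lemma measurable_transport ij :
  measurable_fun [set: T] (fun t => transport (u t) (v t) ij).
Proof.
apply: ge0_emeasurable_sum => [n t _ _|n _].
  by apply: nneseries_ge0 => m _ _; rewrite lee_fin coupling_ge0.
apply: ge0_emeasurable_sum => [m t _ _|m _]; first by rewrite lee_fin coupling_ge0.
by apply/measurable_EFinP; exact: measurable_coupling.
Qed.

End measurable_transport.

Section product_sigma.
Variables (I T A B X : Type) (ST : set (set T)) (SA : set (set A)) (SB : set (set B)).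

Lemma pi_sigma_coord i (Y : set T) :
  ST Y -> pi_sigma ST ((fun f : I -> T => f i) @^-1` Y).
Proof.
by move=> STY; apply: sub_sigma_algebra; exists i => //; exists Y; rewrite ?setTI.
Qed.

(* [prod_sigma SA SB] is [<<s prod_sigma_gen >>], hence the sigma-algebra of
   [g_sigma_algebraType prod_sigma_gen]. *)
Definition prod_sigma_gen : set (set (A * B)) :=
  preimage_set_system setT fst SA `|` preimage_set_system setT snd SB.

Lemma prod_sigma_fst (Y : set A) : SA Y -> prod_sigma SA SB (fst @^-1` Y).
Proof. by move=> SAY; apply: sub_sigma_algebra; left; exists Y; rewrite ?setTI. Qed.

Lemma prod_sigma_snd (Y : set B) : SB Y -> prod_sigma SA SB (snd @^-1` Y).
Proof. by move=> SBY; apply: sub_sigma_algebra; right; exists Y; rewrite ?setTI. Qed.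

Lemma measurable_on_pi (SX : set (set X)) (D : set X) (f : X -> I -> T) :
  sigma_algebra setT SX ->
  (forall i Y, ST Y -> SX ((fun x => f x i) @^-1` Y)) ->
  measurable_on SX (pi_sigma ST) D f.
Proof.
move=> SX_sigma mf Y piY; exists (f @^-1` Y); split => //.
suff sub_image : pi_sigma ST `<=` image_set_system setT f SX.
  by have := sub_image _ piY; rewrite /image_set_system /= setTI.
apply: smallest_sub; first exact: (sigma_algebra_image f SX_sigma).
by move=> _ [i _ [Z STZ <-]]; rewrite /image_set_system /= !setTI; exact: mf.
Qed.

End product_sigma.

Theorem lemma4p17 (R : realType) :
  exists d : (nat -> \bar R) * (nat -> \bar R) -> (nat * nat -> \bar R),
    measurable_on
      (prod_sigma (pi_sigma (ereal_borel R)) (pi_sigma (ereal_borel R)))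
      (pi_sigma (ereal_borel R)) (bal_dom R) d /\
    forall uv, bal_dom R uv ->
      (forall ij, (0 <= d uv ij)%E) /\
      (forall i, uv.1 i = (\sum_(j <oo) d uv (i, j))%E) /\
      (forall j, uv.2 j = (\sum_(i <oo) d uv (i, j))%E).
Proof.
exists (fun uv => transport uv.1 uv.2); split; last first.
  move=> [u v] [/= u_ge0 [v_ge0 sum_uv]]; split; first exact: transport_ge0.
  by split => [i|j]; [rewrite nneseries_transport_row|rewrite nneseries_transport_col].
pose SE : set (set (nat -> \bar R)) := pi_sigma (ereal_borel R).
have mfst i : measurable_fun [set: g_sigma_algebraType (prod_sigma_gen SE SE)]
    (fun uv => uv.1 i).
  move=> _ Y mY; rewrite setTI.
  exact: (prod_sigma_fst (SB := SE) (pi_sigma_coord i mY)).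
have msnd j : measurable_fun [set: g_sigma_algebraType (prod_sigma_gen SE SE)]
    (fun uv => uv.2 j).
  move=> _ Y mY; rewrite setTI.
  exact: (prod_sigma_snd (SA := SE) (pi_sigma_coord j mY)).
apply: measurable_on_pi => [|ij Y mY]; first exact: smallest_sigma_algebra.
by have := measurable_transport mfst msnd ij measurableT mY; rewrite setTI.
Qed.
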